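(* Let $t$ be a positive integer, let $M$ be a matroid with the $(t,2t)$-property, and let $(S_1,\ldots, S_n)$ be a $t$-echidna of $M$ with $n\geq3t-1$. Let $I$ be a $(t-1)$-element subset of $\{1,\dots,n\}$. Then for every $z\in E(M)-\bigcup_{i \in I}S_i$, there is a $2t$-element circuit of $M$ and a $2t$-element cocircuit of $M$ each containing $\{z\} \cup \bigcup_{i \in I}S_i$.
   Context: A matroid $M$ has the $(t,2t)$-property if every $t$-element subset of $E(M)$ is contained in both a $2t$-element circuit and a $2t$-element cocircuit of $M$. A $t$-echidna of order $n$ of $M$ is a partition $(S_1,\ldots,S_n)$ of a subset of $E(M)$ such that $|S_i|=2$ for all $i\in\{1,\dots,n\}$, and $\bigcup_{i\in I}S_i$ is a circuit of $M$ for every $I\subseteq\{1,\dots,n\}$ with $|I|=t$. *)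

From mathcomp Require Import all_boot.
Set Implicit Arguments. Unset Strict Implicit. Unset Printing Implicit Defensive.

Section Matroid.
Variable T : finType.
Variable E : {set T}.
Variable indep : pred {set T}.

Definition is_matroid : Prop :=
  [/\ forall X : {set T}, indep X -> X \subset E,
      indep set0,
      forall X Y : {set T}, indep Y -> X \subset Y -> indep X &
      forall X Y : {set T}, indep X -> indep Y -> #|X| < #|Y| ->
        exists2 e, e \in Y :\: X & indep (e |: X)].

Definition basis (B : {set T}) : bool :=
  indep B && [forall e in E :\: B, ~~ indep (e |: B)].

Definition circuit (C : {set T}) : bool :=
  [&& C \subset E, ~~ indep C & [forall X : {set T}, (X \proper C) ==> indep X]].

Definition dual_indep (X : {set T}) : bool :=
  (X \subset E) && [exists B : {set T}, basis B && [disjoint X & B]].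

End Matroid.

Definition cocircuit (T : finType) (E : {set T}) (indep : pred {set T})
  (C : {set T}) : bool := circuit E (dual_indep E indep) C.

Definition t2t_property (T : finType) (E : {set T}) (indep : pred {set T})
  (t : nat) : Prop :=
  forall X : {set T}, X \subset E -> #|X| = t ->
    (exists2 C, circuit E indep C & (#|C| = 2 * t) /\ X \subset C) /\
    (exists2 D, cocircuit E indep D & (#|D| = 2 * t) /\ X \subset D).

Definition echidna (T : finType) (E : {set T}) (indep : pred {set T})
  (t n : nat) (S : 'I_n -> {set T}) : Prop :=
  [/\ forall i, S i \subset E,
      forall i, #|S i| = 2,
      forall i j, i != j -> [disjoint S i & S j] &
      forall J : {set 'I_n}, #|J| = t -> circuit E indep (\bigcup_(i in J) S i)].

From mathcomp Require Import all_boot zify.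
Set Implicit Arguments. Unset Strict Implicit. Unset Printing Implicit Defensive.

(** A circuit and a cocircuit never meet in exactly one element.  Since
    [n >= 3t - 1], for any set [X] of at most [2t] elements meeting a pair [S_i]
    in a single element [x], [t - 1] further pairs can be chosen disjoint from
    [X]; together with [S_i] they form a circuit meeting [X] exactly in [x].
    Hence a [2t]-element cocircuit meeting a pair contains it.  So does a
    [2t]-element circuit [C]: otherwise the [2t]-element cocircuit through [x]
    and one element of each of the other [t - 1] pairs absorbs all [t] pairs,
    hence equals their union, and meets [C] exactly in [x].  The theorem follows
    by applying the [(t,2t)]-property to [z] together with one element of each
    [S_i], [i] in [I]. *)

Lemma subset_of_card (T : finType) (A : {set T}) k :
  k <= #|A| -> exists2 B : {set T}, B \subset A & #|B| = k.
Proof.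
case/card_geqP=> s [uniq_s <- sA]; exists [set x in s].
  by apply/subsetP=> x; rewrite inE; apply: sA.
by rewrite cardsE; apply/card_uniqP.
Qed.

Lemma setI_card2_eq1 (T : finType) (A X : {set T}) x :
  #|A| = 2 -> x \in A -> x \in X -> ~~ (A \subset X) -> A :&: X = [set x].
Proof.
move=> A2 xA xX notAX; apply/eqP; rewrite eq_sym eqEcard sub1set inE xA xX cards1.
by rewrite -ltnS -A2 proper_card // properE subsetIl subsetI subxx.
Qed.

Lemma card_bigcup_disjoint (I T : finType) (F : I -> {set T}) (K : {set I}) :
  (forall i j, i != j -> [disjoint F i & F j]) ->
  #|\bigcup_(k in K) F k| = \sum_(k in K) #|F k|.
Proof.
move=> disF; rewrite -!big_enum /=.
elim: (enum K) (enum_uniq K) => [|k s IH] /=; first by rewrite !big_nil cards0.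
case/andP=> ks /IH {}IH; rewrite !big_cons cardsU IH.
suff /disjoint_setI0 -> : [disjoint F k & \bigcup_(j <- s) F j].
  by rewrite cards0 subn0.
rewrite bigcup_seq; apply: bigcup_disjoint => j js; apply: disF.
by apply: contraNneq ks => ->.
Qed.

Section DisjointFamily.
Variables (I T : finType) (S : I -> {set T}).
Hypothesis disS : forall i j, i != j -> [disjoint S i & S j].

Lemma card_avoiding (D : {set T}) : #|I| <= #|[set j | [disjoint S j & D]]| + #|D|.
Proof.
rewrite -(cardsC [set j | [disjoint S j & D]]) leq_add2l.
set G := ~: _; rewrite -sum1_card.
apply: (@leq_trans (\sum_(j in G) #|S j :&: D|)).
  by apply: leq_sum => j; rewrite !inE card_gt0 setI_eq0.
rewrite -card_bigcup_disjoint.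
  by apply/subset_leq_card/bigcupsP => j _; apply: subsetIr.
by move=> i j /disS; apply/disjointW; apply: subsetIl.
Qed.

Lemma exists_bigcup_meet1 k (X : {set T}) i x :
  0 < k -> #|X| + k <= #|I|.+1 -> S i :&: X = [set x] ->
  exists K : {set I},
    [/\ #|K| = k, i \in K & \bigcup_(j in K) S j :&: X = [set x]].
Proof.
move=> k_gt0 leXk SiX.
have /setIP[xSi xX] : x \in S i :&: X by rewrite SiX set11.
set F := [set j | [disjoint S j & X :\ x]].
have iF : i \in F by rewrite inE -setI_eq0 setDE setIA SiX setICr.
have : k.-1 <= #|F :\ i|.
  move: leXk; rewrite (cardsD1 x X) xX.
  have := card_avoiding (X :\ x); rewrite -/F (cardsD1 i F) iF; lia.
case/subset_of_card=> K' K'F K'k; exists (i |: K').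
have iK' : i \notin K' by apply/negP=> /(subsetP K'F); rewrite !inE eqxx.
rewrite cardsU1 iK' K'k setU11 big_setU1 //= setIUl SiX; split => //; first lia.
suff /disjoint_setI0 -> : [disjoint \bigcup_(j in K') S j & X] by rewrite setU0.
rewrite disjoint_sym; apply: bigcup_disjoint => j /(subsetP K'F).
rewrite !inE => /andP[ji disj]; rewrite -setI_eq0; apply/eqP/setP=> y.
rewrite !inE; have [->|yx] := eqVneq y x.
  by rewrite (disjointFl (disS ji) xSi) andbF.
by apply/negbTE/andP=> -[yX /(disjointFr disj)]; rewrite !inE yx yX.
Qed.

Lemma exists_transversal (J : {set I}) z :
  (forall j, S j != set0) -> z \notin \bigcup_(j in J) S j ->
  exists Y : {set T}, [/\ #|Y| = #|J|.+1, z \in Y,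
    Y \subset z |: \bigcup_(j in J) S j &
    forall j, j \in J -> exists2 y, y \in S j & y \in Y].
Proof.
move=> S0 zJ; have /fin_all_exists[f fS] : forall j, exists y, y \in S j.
  by move=> j; apply/set0Pn.
have fJ : f @: J \subset \bigcup_(j in J) S j.
  by apply/subsetP=> _ /imsetP[j jJ ->]; apply/bigcupP; exists j.
exists (z |: f @: J); split.
- rewrite cardsU1 (contra (subsetP fJ z) zJ) card_in_imset // => j1 j2 _ _ fj.
  by apply: contraTeq (fS j1) => /disS /disjointFl ->; rewrite // fj.
- exact: setU11.
- exact: setUS.
- by move=> j jJ; exists (f j); rewrite // !inE imset_f ?orbT.
Qed.

Definition absorbing (X : {set T}) : Prop :=
  forall i x, x \in S i -> x \in X -> S i \subset X.

End DisjointFamily.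

Section Matroid.
Variables (T : finType) (E : {set T}) (indep : pred {set T}).
Hypothesis matroidM : is_matroid E indep.

Lemma indep_augment_to (I B : {set T}) :
  indep I -> indep B -> #|I| <= #|B| ->
  exists A : {set T}, [/\ indep A, I \subset A, A \subset I :|: B & #|A| = #|B|].
Proof.
have [_ _ _ augment] := matroidM; move=> + indB.
have [m] := ubnP (#|B| - #|I|); elim: m I => // m IH I ltm indI.
rewrite leq_eqVlt => /orP[/eqP IB | ltIB].
  by exists I; rewrite subxx subsetUl.
have [e /setDP[eB eI] indeI] := augment I B indI indB ltIB.
have card_eI : #|e |: I| = #|I|.+1 by rewrite cardsU1 eI.
have [||A [indA eIA AeIB AB]] := IH (e |: I) _ indeI; rewrite ?card_eI //; first lia.
exists A; split=> //; first exact: subset_trans (subsetUr _ _) eIA.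
by apply: (subset_trans AeIB); rewrite -setUA subUset sub1set !inE eB orbT subxx.
Qed.

Lemma indep_card_le_basis (A B : {set T}) : basis E indep B -> indep A -> #|A| <= #|B|.
Proof.
have [subE _ _ augment] := matroidM.
case/andP=> indB /forall_inP maxB indA; rewrite leqNgt; apply/negP=> ltBA.
have [e /setDP[eA eB] indeB] := augment B A indB indA ltBA.
by have := maxB e; rewrite inE eB (subsetP (subE A indA)) // indeB => /(_ isT).
Qed.

Lemma indep_basis_card (A B : {set T}) :
  basis E indep B -> indep A -> #|A| = #|B| -> basis E indep A.
Proof.
move=> basB indA AB; rewrite /basis indA; apply/forall_inP=> e /setDP[_ eA].
apply/negP=> /(indep_card_le_basis basB); rewrite cardsU1 eA AB; lia.
Qed.

Lemma indep_extend_basis (I B : {set T}) :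
  basis E indep B -> indep I ->
  exists2 A : {set T}, basis E indep A & I \subset A /\ A \subset I :|: B.
Proof.
move=> basB indI; have indB : indep B by case/andP: basB.
have [A [indA IA AIB AB]] := indep_augment_to indI indB (indep_card_le_basis basB indI).
by exists A; first exact: indep_basis_card basB indA AB.
Qed.

Lemma circuit_cocircuit_meet_neq1 (C D : {set T}) :
  circuit E indep C -> cocircuit E indep D -> #|C :&: D| != 1.
Proof.
have [_ _ indS _] := matroidM.
case/and3P=> _ depC /forall_inP minC /and3P[DE codepD /forall_inP minD].
apply/cards1P=> -[x CDx].
have /setIP[xC xD] : x \in C :&: D by rewrite CDx set11.
have /andP[_ /existsP[B /andP[basB disB]]] := minD _ (properD1 xD).
have [A basA [CxA ACxB]] := indep_extend_basis basB (minC _ (properD1 xC)).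
have xA : x \notin A.
  apply: contra depC => xA; apply: indS (proj1 (andP basA)) _.
  by rewrite -(setD1K xC) subUset sub1set xA.
apply: (negP codepD); rewrite /dual_indep DE; apply/existsP; exists A.
rewrite basA -setI_eq0; apply/eqP/setP=> y; rewrite !inE.
have [-> | yx] := eqVneq y x; first by rewrite (negbTE xA) andbF.
apply/negbTE/andP=> -[yD /(subsetP ACxB)]; rewrite !inE yx /= => /orP[yC | yB].
  have : y \in C :&: D by rewrite inE yC yD.
  by rewrite CDx inE (negbTE yx).
by move: (disjointFl disB yB); rewrite !inE yx yD.
Qed.

End Matroid.

Section Echidna.
Variables (T : finType) (E : {set T}) (indep : pred {set T}) (t n : nat).
Variable S : 'I_n -> {set T}.
Hypotheses (t_gt0 : 0 < t) (matroidM : is_matroid E indep).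
Hypotheses (t2tM : t2t_property E indep t) (echS : echidna E indep t S).
Hypothesis n_ge : 3 * t - 1 <= n.

Lemma t2t_transversal_cover (P : pred {set T}) (J : {set 'I_n}) z :
  (forall X : {set T}, P X -> #|X| = 2 * t -> absorbing S X) ->
  (forall Y : {set T}, Y \subset E -> #|Y| = t ->
     exists2 X, P X & #|X| = 2 * t /\ Y \subset X) ->
  #|J| = t - 1 -> z \in E -> z \notin \bigcup_(j in J) S j ->
  exists2 X, P X & #|X| = 2 * t /\ z |: \bigcup_(j in J) S j \subset X.
Proof.
have [SE S2 disS _] := echS; move=> absP coverP Jt zE zJ.
have S0 j : S j != set0 by rewrite -card_gt0 S2.
have [Y [Yt zY YJ meetY]] := exists_transversal disS S0 zJ.
have YE : Y \subset E.
  apply: subset_trans YJ _; rewrite subUset sub1set zE; exact/bigcupsP.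
have [|X PX [Xt YX]] := coverP Y YE; first by rewrite Yt Jt subn1 prednK.
exists X => //; split=> //; rewrite subUset sub1set (subsetP YX) //=.
apply/bigcupsP=> j /meetY[y ySj yY].
exact: absP PX Xt j y ySj (subsetP YX y yY).
Qed.

Lemma echidna_exists_bigcup_meet1 (X : {set T}) i x :
  #|X| <= 2 * t -> x \in S i -> x \in X -> ~~ (S i \subset X) ->
  exists K : {set 'I_n},
    [/\ #|K| = t, i \in K & \bigcup_(j in K) S j :&: X = [set x]].
Proof.
have [_ S2 disS _] := echS; move=> leX xSi xX notSiX.
have := exists_bigcup_meet1 disS t_gt0 _ (setI_card2_eq1 (S2 i) xSi xX notSiX).
by apply; rewrite card_ord; lia.
Qed.

Lemma cocircuit_absorbing (D : {set T}) :
  cocircuit E indep D -> #|D| <= 2 * t -> absorbing S D.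
Proof.
have [_ _ _ circS] := echS; move=> coD leD i x xSi xD; apply/contraT=> notSiD.
have [K [Kt _ KD]] := echidna_exists_bigcup_meet1 leD xSi xD notSiD.
by have := circuit_cocircuit_meet_neq1 matroidM (circS K Kt) coD; rewrite KD cards1.
Qed.

Lemma circuit_absorbing (C : {set T}) :
  circuit E indep C -> #|C| <= 2 * t -> absorbing S C.
Proof.
have [SE S2 disS _] := echS; move=> cirC leC i x xSi xC; apply/contraT=> notSiC.
have [K [Kt iK KC]] := echidna_exists_bigcup_meet1 leC xSi xC notSiC.
have [|||||D coD [Dt KiD]] := @t2t_transversal_cover (cocircuit E indep) (K :\ i) x.
- by move=> D coD Dt; apply: cocircuit_absorbing; rewrite ?Dt.
- by move=> Y YE Yt; case: (t2tM YE Yt).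
- by rewrite -Kt (cardsD1 i K) iK add1n subn1.
- exact: subsetP (SE i) x xSi.
- by apply/bigcupP=> -[j /setD1P[ji _]]; rewrite (disjointFl (disS _ _ ji) xSi).
have KD : \bigcup_(j in K) S j = D.
  apply/eqP; rewrite eqEcard (card_bigcup_disjoint _ disS) (eq_bigr (fun=> 2)) //.
  rewrite sum_nat_const Kt Dt mulnC leqnn andbT (big_setD1 i iK) /= subUset.
  have xD : x \in D by rewrite (subsetP KiD) ?setU11.
  rewrite (cocircuit_absorbing coD _ xSi xD) ?Dt //.
  exact: subset_trans (subsetUr _ _) KiD.
by have := circuit_cocircuit_meet_neq1 matroidM cirC coD; rewrite -KD setIC KC cards1.
Qed.

End Echidna.

Theorem lemma4p4 (T : finType) (E : {set T}) (indep : pred {set T})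
  (t n : nat) (S : 'I_n -> {set T}) (J : {set 'I_n}) (z : T) :
  0 < t -> is_matroid E indep -> t2t_property E indep t ->
  echidna E indep t S -> 3 * t - 1 <= n ->
  #|J| = t - 1 -> z \in E -> z \notin \bigcup_(i in J) S i ->
  (exists2 C, circuit E indep C &
     (#|C| = 2 * t) /\ z |: \bigcup_(i in J) S i \subset C) /\
  (exists2 D, cocircuit E indep D &
     (#|D| = 2 * t) /\ z |: \bigcup_(i in J) S i \subset D).
Proof.
move=> t_gt0 matroidM t2tM echS n_ge Jt zE zJ.
split; apply: (t2t_transversal_cover t_gt0 echS) => //.
- move=> C cirC Ct; apply: (circuit_absorbing t_gt0 matroidM t2tM echS n_ge cirC).
  by rewrite Ct.
- by move=> Y YE Yt; case: (t2tM Y YE Yt).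
- move=> D coD Dt; apply: (cocircuit_absorbing t_gt0 matroidM echS n_ge coD).
  by rewrite Dt.
- by move=> Y YE Yt; case: (t2tM Y YE Yt).
Qed.
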